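(* Fix $k\in\mathbb{Z}_{\geq 1}$ and a set of patterns $B\subseteq\mathcal S$ such that $\mathrm{Av}(B)$ is nonempty and closed under $\oplus$ or closed under $\ominus$. Then the overlap graph $\mathcal{O}v(k,\mathrm{Av}(B))$ is strongly connected and its cycle polytope satisfies $\dim P(\mathcal{O}v(k,\mathrm{Av}(B)))=|\mathrm{Av}_k(B)|-|\mathrm{Av}_{k-1}(B)|$. In particular this holds for $B=\{\tau\}$, for any single pattern $\tau\in\mathcal S$.
   Context: For $n\ge1$, $\mathcal S_n$ is the set of permutations of $[n]$ in one-line notation, $\mathcal S=\bigcup_{n\ge1}\mathcal S_n$; by convention $\mathrm{Av}_0(B)$ consists of the empty permutation. For distinct reals $x_1,\dots,x_m$, $\mathrm{std}(x_1,\dots,x_m)$ is the unique $\pi\in\mathcal S_m$ with $\pi(i)<\pi(j)\iff x_i<x_j$; for $I=\{i_1<\dots<i_m\}$, $\mathrm{pat}_I(\sigma)=\mathrm{std}(\sigma(i_1),\dots,\sigma(i_m))$. $\sigma$ avoids $\pi$ if no $I$ has $\mathrm{pat}_I(\sigma)=\pi$. $\mathrm{Av}_n(B)$ is the set of permutations of size $n$ avoiding every element of $B$, $\mathrm{Av}(B)=\bigcup_{n\ge1}\mathrm{Av}_n(B)$. Overlap graph: $\mathcal{O}v(k,\mathrm{Av}(B))$ is the directed multigraph with vertex set $\mathrm{Av}_{k-1}(B)$ and, for each $\pi\in\mathrm{Av}_k(B)$, one edge labelled $\pi$ from $\mathrm{pat}_{\{1,\dots,k-1\}}(\pi)$ to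 $\mathrm{pat}_{\{2,\dots,k\}}(\pi)$. A simple cycle is a closed walk with distinct edges and distinct vertices; for a nonempty cycle $\mathcal C$, $\vec e_{\mathcal C}\in\mathbb R^{E}$ has $e$-coordinate (number of occurrences of $e$ in $\mathcal C$)$/|\mathcal C|$; the cycle polytope is $P(G)=\mathrm{conv}\{\vec e_{\mathcal C}:\mathcal C\text{ simple cycle of }G\}$. Direct sum $\tau\oplus\sigma=\tau(1)\cdots\tau(m)(\sigma(1)+m)\cdots(\sigma(n)+m)$ for $\tau\in\mathcal S_m,\sigma\in\mathcal S_n$; skew sum $\tau\ominus\sigma=(\tau(1)+n)\cdots(\tau(m)+n)\sigma(1)\cdots\sigma(n)$. Dimension of a polytope means dimension of its affine hull. *)

From HB Require Import structures.
From mathcomp Require Import all_boot all_order all_algebra.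
From mathcomp Require Import boolp.
Set Implicit Arguments. Unset Strict Implicit. Unset Printing Implicit Defensive.
Import Order.TTheory GRing.Theory Num.Theory.

Definition is_perm (s : seq nat) : bool := perm_eq s (iota 1 (size s)).

(* std(x_1..x_m): replace each entry by its rank (values assumed distinct). *)
Definition std (s : seq nat) : seq nat :=
  [seq (count (fun y => y < x) s).+1 | x <- s].

(* sigma contains pi: some index set I (a bit mask) with pat_I(sigma) = pi. *)
Definition contains (sigma pi : seq nat) : Prop :=
  exists m : bitseq, size m = size sigma /\ std (mask m sigma) = pi.

Definition avoids_all (B : seq nat -> Prop) (sigma : seq nat) : Prop :=
  forall pi, B pi -> ~ contains sigma pi.

(* Av_n(B), as a duplicate-free list; Av_0(B) = [:: [::]]. *)
Definition Av (B : seq nat -> Prop) (n : nat) : seq (seq nat) :=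
  [seq s <- permutations (iota 1 n) | `[< avoids_all B s >]].

Definition inAv (B : seq nat -> Prop) (s : seq nat) : Prop :=
  [/\ 0 < size s, is_perm s & avoids_all B s].

Definition dsum (t s : seq nat) : seq nat := t ++ [seq x + size t | x <- s].
Definition ssum (t s : seq nat) : seq nat := [seq x + size s | x <- t] ++ s.

Definition closed_dsum B := forall t s, inAv B t -> inAv B s -> inAv B (dsum t s).
Definition closed_ssum B := forall t s, inAv B t -> inAv B s -> inAv B (ssum t s).

(* Overlap graph Ov(k, Av(B)): vertices Av_{k-1}(B), one edge per pi in Av_k(B),
   from pat_{1..k-1}(pi) to pat_{2..k}(pi).  Edges are identified with labels. *)
Definition ov_src (k : nat) (e : seq nat) : seq nat := std (take k.-1 e).
Definition ov_tgt (e : seq nat) : seq nat := std (drop 1 e).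

Fixpoint is_walk (k : nat) (u : seq nat) (w : seq (seq nat)) (v : seq nat) : bool :=
  match w with
  | [::] => u == v
  | e :: w' => (ov_src k e == u) && is_walk k (ov_tgt e) w' v
  end.

Definition ov_strongly_connected (B : seq nat -> Prop) (k : nat) : Prop :=
  forall u v, u \in Av B k.-1 -> v \in Av B k.-1 ->
    exists w : seq (seq nat), all (mem (Av B k)) w && is_walk k u w v.

Definition simple_cycle (B : seq nat -> Prop) (k : nat) (w : seq (seq nat)) : bool :=
  match w with
  | [::] => false
  | e :: _ => [&& all (mem (Av B k)) w, is_walk k (ov_src k e) w (ov_src k e),
               uniq w & uniq [seq ov_src k f | f <- w]]
  end.

Local Open Scope ring_scope.

(* \vec e_C in R^E, E = Av_k(B) indexed by position in the list Av B k *)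
Definition cycle_vec (R : realFieldType) (B : seq nat -> Prop) (k : nat)
  (w : seq (seq nat)) : 'rV[R]_(size (Av B k)) :=
  \row_(i < size (Av B k)) ((count_mem (nth [::] (Av B k) i) w)%:R / (size w)%:R).

Definition conv (R : realFieldType) (N : nat) (S : 'rV[R]_N -> Prop) (x : 'rV[R]_N) : Prop :=
  exists (n : nat) (p : 'I_n -> 'rV[R]_N) (l : 'I_n -> R),
    [/\ forall i, S (p i), forall i, 0 <= l i, \sum_i l i = 1
      & x = \sum_i l i *: p i].

Definition cycle_polytope (R : realFieldType) (B : seq nat -> Prop) (k : nat)
  : 'rV[R]_(size (Av B k)) -> Prop :=
  @conv R (size (Av B k)) (fun x => exists w, simple_cycle B k w /\ x = @cycle_vec R B k w).

Definition aff_indep (R : realFieldType) (N d : nat) (x : 'I_d.+1 -> 'rV[R]_N) : bool :=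
  row_free (\matrix_(i < d) (x (lift ord0 i) - x ord0)).

(* X has affine dimension d: d is the maximal number such that X contains d+1
   affinely independent points (= dimension of the affine hull of X). *)
Definition is_affdim (R : realFieldType) (N : nat) (X : 'rV[R]_N -> Prop) (d : nat) : Prop :=
  (exists x : 'I_d.+1 -> 'rV[R]_N, (forall i, X (x i)) /\ aff_indep x) /\
  (forall (e : nat) (x : 'I_e.+1 -> 'rV[R]_N),
      (forall i, X (x i)) -> aff_indep x -> (e <= d)%N).

Definition ov_conclusion (R : realFieldType) (B : seq nat -> Prop) (k : nat) : Prop :=
  ov_strongly_connected B k /\
  exists d : nat, @is_affdim R (size (Av B k)) (@cycle_polytope R B k) d /\
    (d%:Z = (size (Av B k))%:Z - (size (Av B k.-1))%:Z)%R.

From HB Require Import structures.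
From mathcomp Require Import all_boot all_order all_algebra.
From mathcomp Require Import boolp zify lra.
Set Implicit Arguments. Unset Strict Implicit. Unset Printing Implicit Defensive.

(* Closure under (skew) sums makes the overlap graph strongly connected: for u, v
   in Av_{k-1}(B), the consecutive length-k windows of u (+) v (or u (-) v) form a
   walk from u to v.  For a strongly connected graph with vertex set V and edge set
   E the cycle polytope has dimension |E| - |V|.  Every cycle vector is a circulation
   of total weight 1, and these |V| + 1 linear constraints have rank |V|, because
   the left kernel of the incidence matrix consists of the constant vectors; this
   is the upper bound.  Conversely, a vector orthogonal to all simple cycle vectors
   gives weight 0 to every closed walk, so it is a potential difference; hence the
   simple cycle vectors span a space of dimension at least |E| - |V| + 1, which is
   the lower bound.  Finally Av(tau) is closed under (+) unless tau is
   (+)-decomposable, under (-) unless tau is (-)-decomposable, and no sequence is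
   both. *)

(** * Standardization *)

Definition rank_in (s : seq nat) (x : nat) := (count (fun y => y < x) s).+1.

Lemma stdE s : std s = map (rank_in s) s.
Proof. by []. Qed.

Lemma size_std s : size (std s) = size s.
Proof. exact: size_map. Qed.

Lemma rank_in_homo (s : seq nat) : {in s &, {homo rank_in s : x y / x < y}}.
Proof.
move=> x y xs _ xy; rewrite /rank_in ltnS.
have -> : count (fun z => z < y) s = count (fun z => z < x) s + count (fun z => x <= z < y) s.
  rewrite -count_predUI -[LHS]addn0 -(count_pred0 s); congr (_ + _); apply: eq_count => z /=.
    by case: (ltnP z x) => //= zx; rewrite (ltn_trans zx xy).
  by case: ltnP.
by rewrite -[X in X < _]addn0 ltn_add2l -has_count; apply/hasP; exists x; rewrite ?leqnn.
Qed.

Lemma rank_in_leq_mono (s : seq nat) : {in s &, {mono rank_in s : x y / x <= y}}.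
Proof. exact/leq_mono_in/rank_in_homo. Qed.

Lemma rank_in_mono (s : seq nat) : {in s &, {mono rank_in s : x y / x < y}}.
Proof. exact/leqW_mono_in/rank_in_leq_mono. Qed.

Lemma std_map_mono (f : nat -> nat) (t : seq nat) :
  {in t &, {mono f : x y / x < y}} -> std (map f t) = std t.
Proof.
move=> fm; rewrite /std -map_comp; apply/eq_in_map => x xt /=.
by rewrite count_map; congr S; apply: eq_in_count => y yt /=; rewrite fm.
Qed.

Lemma std_shift (c : nat) (t : seq nat) : std [seq x + c | x <- t] = std t.
Proof. by apply: std_map_mono => x y _ _; rewrite ltn_add2r. Qed.

Lemma std_map_rank_in (s t : seq nat) :
  {subset t <= s} -> std (map (rank_in s) t) = std t.
Proof. by move=> ts; apply: std_map_mono => x y /ts xs /ts ys; apply: rank_in_mono. Qed.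

Lemma std_take n (s : seq nat) : std (take n (std s)) = std (take n s).
Proof. by rewrite [std s]stdE -map_take std_map_rank_in // => x /mem_take. Qed.

Lemma std_drop n (s : seq nat) : std (drop n (std s)) = std (drop n s).
Proof. by rewrite [std s]stdE -map_drop std_map_rank_in // => x /mem_drop. Qed.

Lemma std_mask m (s : seq nat) : std (mask m (std s)) = std (mask m s).
Proof. by rewrite [std s]stdE -map_mask std_map_rank_in // => x /mem_mask. Qed.

Lemma nth_std_lt (s : seq nat) i j : i < size s -> j < size s ->
  (nth 0 (std s) i < nth 0 (std s) j) = (nth 0 s i < nth 0 s j).
Proof. by move=> hi hj; rewrite stdE !(nth_map 0) // rank_in_mono ?mem_nth. Qed.

Lemma perm_std_iota (t : seq nat) : uniq t -> perm_eq (std t) (iota 1 (size t)).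
Proof.
move=> ut; have ust : uniq (std t).
  by rewrite stdE map_inj_in_uniq //; apply/incn_inj_in/rank_in_leq_mono.
have sub : {subset std t <= iota 1 (size t)}.
  move=> _ /mapP [x xt ->]; rewrite mem_iota add1n ltnS /=.
  rewrite -(count_predC (fun y => y < x) t) -[X in X < _]addn0 ltn_add2l -has_count.
  by apply/hasP; exists x; rewrite //= ltnn.
have sz : size (iota 1 (size t)) <= size (std t) by rewrite size_iota size_std.
have [_ /uniq_perm] := uniq_min_size ust sub sz.
by apply=> //; apply: iota_uniq.
Qed.

Lemma count_lt_iota x a n : count (fun y => y < x) (iota a n) = minn (x - a) n.
Proof.
elim: n a => [|n IH] a /=; first by rewrite minn0.
by rewrite IH; case: (ltnP a x) => ax /=; lia.
Qed.

Lemma std_perm_iota (u : seq nat) n : perm_eq u (iota 1 n) -> std u = u.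
Proof.
move=> pu; rewrite stdE -[RHS]map_id; apply/eq_in_map => x.
by rewrite /rank_in (permP pu) count_lt_iota (perm_mem pu) mem_iota /=; lia.
Qed.

(** * Pattern avoidance *)

Lemma containsP (sigma pi : seq nat) :
  contains sigma pi <-> exists2 t, subseq t sigma & std t = pi.
Proof.
split=> [[m [_ <-]]|[_ /subseqP [m sm ->] <-]]; last by exists m.
by exists (mask m sigma); rewrite ?mask_subseq.
Qed.

Lemma avoids_std_subseq B (sigma t : seq nat) :
  avoids_all B sigma -> subseq t sigma -> avoids_all B (std t).
Proof.
move=> av ts pi Bpi /containsP [_ /subseqP [m _ ->] std_pi]; move: Bpi.
rewrite -std_pi => /av; apply; apply/containsP.
by exists (mask m t); rewrite ?std_mask ?(subseq_trans (mask_subseq _ _) ts).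
Qed.

Lemma avoids_shift B c (s : seq nat) : avoids_all B s -> avoids_all B [seq x + c | x <- s].
Proof.
move=> av pi Bpi [m [sm occ]]; apply: (av _ Bpi); exists m.
by rewrite -occ -map_mask std_shift -(size_map (addn^~ c)).
Qed.

Lemma mem_Av B n s : (s \in Av B n) <-> perm_eq s (iota 1 n) /\ avoids_all B s.
Proof.
rewrite mem_filter mem_permutations.
by split=> [/andP [/asboolP av p] | [p /asboolP av]] //; rewrite p av.
Qed.

Lemma Av_uniq B n : uniq (Av B n).
Proof. by rewrite filter_uniq // permutations_uniq. Qed.

Lemma size_Av B n s : s \in Av B n -> size s = n.
Proof. by move=> /mem_Av [/perm_size -> _]; rewrite size_iota. Qed.

Lemma std_Av B n s : s \in Av B n -> std s = s.
Proof. by move=> /mem_Av [p _]; exact: std_perm_iota p. Qed.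

Lemma inAv_Av B s : inAv B s -> s \in Av B (size s).
Proof. by case=> _ p av; apply/mem_Av. Qed.

Lemma Av_inAv B n s : 0 < n -> s \in Av B n -> inAv B s.
Proof.
move=> n0 sA; have /mem_Av [p av] := sA.
by split; rewrite /is_perm ?(size_Av sA).
Qed.

Lemma std_subseq_Av B (sigma t : seq nat) :
  uniq sigma -> avoids_all B sigma -> subseq t sigma -> std t \in Av B (size t).
Proof.
move=> us av ts; apply/mem_Av; split; last exact: avoids_std_subseq av ts.
by apply: perm_std_iota; exact: subseq_uniq ts us.
Qed.

Lemma Av_uniq_avoids B n s : s \in Av B n -> uniq s /\ avoids_all B s.
Proof. by move=> /mem_Av [p av]; rewrite (perm_uniq p) iota_uniq. Qed.

Lemma ov_src_Av B k e : e \in Av B k -> ov_src k e \in Av B k.-1.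
Proof.
move=> eA; have [ue av] := Av_uniq_avoids eA.
have := std_subseq_Av ue av (take_subseq e k.-1).
by rewrite size_takel // (size_Av eA) leq_pred.
Qed.

Lemma ov_tgt_Av B k e : e \in Av B k -> ov_tgt e \in Av B k.-1.
Proof.
move=> eA; have [ue av] := Av_uniq_avoids eA.
by have := std_subseq_Av ue av (drop_subseq e 1); rewrite size_drop (size_Av eA) subn1.
Qed.

(** * Strong connectivity *)

Definition window k (sigma : seq nat) i := std (take k (drop i sigma)).

Lemma window_Av B k sigma i : inAv B sigma -> i + k <= size sigma ->
  window k sigma i \in Av B k.
Proof.
move=> [_ ps av] hik; have us : uniq sigma by rewrite (perm_uniq ps) iota_uniq.
have := std_subseq_Av us av (subseq_trans (take_subseq _ k) (drop_subseq sigma i)).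
by rewrite size_takel // size_drop; lia.
Qed.

Lemma is_walk_windows n (sigma : seq nat) i j :
  is_walk n.+1 (window n sigma i) [seq window n.+1 sigma l | l <- iota i j]
    (window n sigma (i + j)).
Proof.
elim: j i => [|j IH] i /=; first by rewrite addn0.
rewrite /ov_src /ov_tgt /window std_take std_drop take_takel //= eqxx /=.
have -> : drop 1 (take n.+1 (drop i sigma)) = take n (drop i.+1 sigma).
  by rewrite -[n.+1]addn1 -take_drop drop_drop add1n.
by rewrite -addSnnS; exact: IH.
Qed.

Lemma exists_sum_with_windows B n u v : closed_dsum B \/ closed_ssum B -> 0 < n ->
  u \in Av B n -> v \in Av B n ->
  exists2 sigma, inAv B sigma &
    [/\ size sigma = n + n, window n sigma 0 = u & window n sigma n = v].
Proof.
move=> cl n0 uA vA; have [su sv] := (size_Av uA, size_Av vA).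
have [hu hv] := (Av_inAv n0 uA, Av_inAv n0 vA).
case: cl => cl; [exists (dsum u v) | exists (ssum u v)]; try exact: cl.
- rewrite /window /dsum drop0 size_cat size_map take_size_cat // drop_size_cat //.
  by rewrite take_oversize ?std_shift ?size_map ?(std_Av uA) ?(std_Av vA) ?su ?sv.
- rewrite /window /ssum drop0 size_cat size_map.
  rewrite take_size_cat ?size_map // drop_size_cat ?size_map //.
  by rewrite take_oversize ?std_shift ?(std_Av uA) ?(std_Av vA) ?su ?sv.
Qed.

Lemma ov_strongly_connected_closed B k : 1 <= k -> closed_dsum B \/ closed_ssum B ->
  ov_strongly_connected B k.
Proof.
case: k => [//|[|n]] _ cl u v uA vA.
  by exists [::]; rewrite (size0nil (size_Av uA)) (size0nil (size_Av vA)).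
have [sigma hs [ssz wu wv]] := exists_sum_with_windows cl (ltn0Sn n) uA vA.
exists [seq window n.+2 sigma l | l <- iota 0 n.+1].
rewrite -wu -wv is_walk_windows andbT.
apply/allP => _ /mapP [l /[!mem_iota] /andP [_ ln] ->].
by apply: window_Av hs _; rewrite ssz; lia.
Qed.

(** * Avoiders of a single pattern *)

(* [decomposable true tau] means tau = alpha (+) beta and [decomposable false tau]
   means tau = alpha (-) beta, with alpha and beta nonempty. *)
Definition ordered (up : bool) (x y : nat) := if up then x < y else y < x.

Definition decomposable (up : bool) (tau : seq nat) :=
  exists2 p, 0 < p < size tau &
    forall i j, i < p <= j -> j < size tau -> ordered up (nth 0 tau i) (nth 0 tau j).

Lemma not_sum_and_skew_decomposable tau :
  decomposable true tau -> decomposable false tau -> False.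
Proof.
move=> [p /andP [p0 pt] sum] [q /andP [q0 qt] skew].
have last_lt : (size tau).-1 < size tau by lia.
have hp : 0 < p <= (size tau).-1 by lia.
have hq : 0 < q <= (size tau).-1 by lia.
by have := sum 0 _ hp last_lt; have := skew 0 _ hq last_lt; rewrite /ordered; lia.
Qed.

Lemma std_cat_decomposable up (a b : seq nat) : a != [::] -> b != [::] ->
  {in a & b, forall x y, ordered up x y} -> decomposable up (std (a ++ b)).
Proof.
move=> a0 b0 ab; exists (size a); rewrite size_std size_cat.
  by rewrite lt0n size_eq0 a0 -[X in X < _]addn0 ltn_add2l lt0n size_eq0.
move=> i j /andP [ia aj] jab; have ib : i < size a + size b by lia.
have ai : nth 0 (a ++ b) i \in a by rewrite nth_cat ia mem_nth.
have bj : nth 0 (a ++ b) j \in b.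
  by rewrite nth_cat ltnNge aj mem_nth // ltn_subLR // -size_cat.
by have := ab _ _ ai bj; rewrite /ordered; case: up {ab}; rewrite nth_std_lt ?size_cat.
Qed.

Lemma mask_cat_split (T : Type) (m : bitseq) (t s : seq T) : size m = size t + size s ->
  mask m (t ++ s) = mask (take (size t) m) t ++ mask (drop (size t) m) s.
Proof.
by move=> sm; rewrite -{1}(cat_take_drop (size t) m) mask_cat // size_takel // sm leq_addr.
Qed.

Lemma avoids_cat up tau (t s : seq nat) : ~ decomposable up tau ->
  avoids_all (eq^~ tau) t -> avoids_all (eq^~ tau) s ->
  {in t & s, forall x y, ordered up x y} -> avoids_all (eq^~ tau) (t ++ s).
Proof.
move=> ndec avt avs ts _ -> [m []]; rewrite size_cat => sm.
rewrite mask_cat_split //; set a := mask _ t; set b := mask _ s => occ.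
have [mt ms] : size (take (size t) m) = size t /\ size (drop (size t) m) = size s.
  by rewrite size_takel ?size_drop sm ?leq_addr ?addKn.
have [a0 | a0] := eqVneq a [::].
  by apply: (avs tau erefl); exists (drop (size t) m); rewrite -occ a0.
have [b0 | b0] := eqVneq b [::].
  by apply: (avt tau erefl); exists (take (size t) m); rewrite -occ b0 cats0.
apply: ndec; rewrite -occ; apply: std_cat_decomposable => // x y /mem_mask xt /mem_mask ys.
exact: ts.
Qed.

Lemma map_addn_iota c a n : [seq x + c | x <- iota a n] = iota (a + c) n.
Proof. by elim: n a => [|n IH] a //=; rewrite IH addSn. Qed.

Lemma perm_dsum t s : is_perm t -> is_perm s -> is_perm (dsum t s).
Proof.
rewrite /is_perm /dsum size_cat size_map iotaD => pt ps.
by rewrite perm_cat // (perm_size pt) size_iota -map_addn_iota (perm_map _ ps).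
Qed.

Lemma perm_ssum t s : is_perm t -> is_perm s -> is_perm (ssum t s).
Proof.
rewrite /is_perm /ssum size_cat size_map addnC iotaD => pt ps.
rewrite perm_catC perm_cat //.
by rewrite (perm_size ps) size_iota -map_addn_iota (perm_map _ pt).
Qed.

Lemma is_perm_mem (s : seq nat) x : is_perm s -> x \in s -> 0 < x <= size s.
Proof. by move=> p; rewrite (perm_mem p) mem_iota add1n ltnS. Qed.

Lemma closed_dsum_single tau : ~ decomposable true tau -> closed_dsum (eq^~ tau).
Proof.
move=> ndec t s [t0 pt avt] [s0 ps avs].
split; rewrite ?size_cat ?addn_gt0 ?t0 ?perm_dsum //.
rewrite /dsum; apply: (avoids_cat ndec avt (avoids_shift avs)) => x _ xt /mapP [y ys ->].
by have := is_perm_mem pt xt; have := is_perm_mem ps ys; rewrite /ordered; lia.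
Qed.

Lemma closed_ssum_single tau : ~ decomposable false tau -> closed_ssum (eq^~ tau).
Proof.
move=> ndec t s [t0 pt avt] [s0 ps avs].
split; rewrite ?size_cat ?size_map ?addn_gt0 ?t0 ?perm_ssum //.
rewrite /ssum; apply: (avoids_cat ndec (avoids_shift avt) avs) => _ y /mapP [x xt ->] ys.
by have := is_perm_mem pt xt; have := is_perm_mem ps ys; rewrite /ordered; lia.
Qed.

Lemma closed_single tau : closed_dsum (eq^~ tau) \/ closed_ssum (eq^~ tau).
Proof.
have [dec | ndec] := EM (decomposable true tau); last by left; exact: closed_dsum_single.
by right; apply: closed_ssum_single => /(not_sum_and_skew_decomposable dec).
Qed.

Lemma inAv_one B : (exists s, inAv B s) -> inAv B [:: 1].
Proof.
move=> [s [s0 _ av]]; case: s s0 av => // x s _ av; split=> //.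
by have := avoids_std_subseq av (prefix_subseq [:: x] s); rewrite /std /= ltnn.
Qed.

Lemma Av_nonempty B m : (forall b, B b -> 0 < size b) -> closed_dsum B \/ closed_ssum B ->
  (exists s, inAv B s) -> exists s, s \in Av B m.
Proof.
move=> B0 cl /inAv_one one; case: m => [|m].
  exists [::]; apply/mem_Av; split=> // pi /B0 + [mk [_ occ]].
  by rewrite -occ mask0.
suff [s hs <-] : exists2 s, inAv B s & size s = m.+1 by exists s; apply: inAv_Av.
elim: m => [|m [s hs <-]]; first by exists [:: 1].
case: cl => cl; [exists (dsum s [:: 1]) | exists (ssum s [:: 1])]; try exact: cl.
all: by rewrite /dsum /ssum size_cat ?size_map addn1.
Qed.

(** * Affine dimension *)

Import GRing.Theory Num.Theory.
Local Open Scope ring_scope.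

Section AffineDimension.
Variables (R : realFieldType) (N : nat).

Lemma conv_mulmx_eq p (A : 'M[R]_(N, p)) c (S : 'rV[R]_N -> Prop) x :
  (forall y, S y -> y *m A = c) -> conv S x -> x *m A = c.
Proof.
move=> SA [n [y [l [Sy _ l1 ->]]]].
rewrite mulmx_suml (eq_bigr (fun i => l i *: c)) => [|i _]; last by rewrite -scalemxAl SA.
by rewrite -scaler_suml l1 scale1r.
Qed.

Lemma conv_self (S : 'rV[R]_N -> Prop) x : S x -> conv S x.
Proof.
by move=> Sx; exists 1%N, (fun=> x), (fun=> 1); split; rewrite ?big_ord1 ?scale1r.
Qed.

Lemma row_free_col_mx m (v : 'rV[R]_N) (A : 'M[R]_(m, N)) :
  row_free A -> ~~ (v <= A)%MS -> row_free (col_mx v A).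
Proof.
move=> Afree vA; rewrite /row_free eqn_leq rank_leq_row -addsmxE /= add1n.
rewrite -[X in (X < _)%N](eqP Afree).
rewrite (ltn_leqif (mxrank_leqif_sup (addsmxSr v A))).
by apply: contra vA; apply: submx_trans (addsmxSl v A).
Qed.

Lemma aff_indep_le_corank p (A : 'M[R]_(N, p)) c e (x : 'I_e.+1 -> 'rV[R]_N) :
  (forall i, x i *m A = c) -> aff_indep x -> (e <= N - \rank A)%N.
Proof.
move=> xA /eqP rD; set D := \matrix_(i < e) _ in rD.
have DA : D *m A = 0.
  by apply/row_matrixP => i; rewrite row_mul rowK row0 mulmxBl !xA subrr.
by rewrite -rD -mxrank_ker mxrankS //; apply/sub_kermxP.
Qed.

Lemma row_free_aff_indep d (x : 'I_d.+1 -> 'rV[R]_N) : row_free (\matrix_i x i) -> aff_indep x.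
Proof.
rewrite /aff_indep; set D := \matrix_(i < d) _ => /eqP rX.
have XD : (\matrix_i x i <= x ord0 + D)%MS.
  apply/row_subP => i; rewrite rowK; case: (unliftP ord0 i) => [j ->|->]; last exact: addsmxSl.
  rewrite -(subrK (x ord0) (x (lift ord0 j))); apply: addmx_sub; last exact: addsmxSl.
  by apply: submx_trans (addsmxSr _ _); apply: (eq_row_sub j); rewrite rowK.
have := mxrankS XD; rewrite rX /row_free eqn_leq rank_leq_row /=.
move/leq_trans/(_ (mxrank_adds_leqif (x ord0) D)); rewrite rank_rV.
by case: (x ord0 == 0); rewrite ?add0n ?add1n // => /ltnW.
Qed.

End AffineDimension.

(** * Cycle polytope of a strongly connected overlap graph *)

Lemma index_ordP (T : eqType) (x0 : T) (s : seq T) y :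
  y \in s -> exists j : 'I_(size s), nth x0 s j = y.
Proof. by move=> ys; exists (Ordinal (etrans (index_mem y s) ys)); rewrite /= nth_index. Qed.

Lemma sum_nth_eq (V : nmodType) (T : eqType) (x0 : T) (s : seq T) (j : 'I_(size s))
    (F : 'I_(size s) -> V) :
  uniq s -> \sum_(i < size s) F i *+ (nth x0 s j == nth x0 s i) = F j.
Proof.
move=> us; rewrite (bigD1 j) //= eqxx big1 ?addr0 // => i ij.
by rewrite nth_uniq //; case: eqP => // /val_inj ji; rewrite ji eqxx in ij.
Qed.

Lemma balance_walk k u w v x : is_walk k u w v ->
  (count (fun f => ov_tgt f == x) w + (u == x) = count (fun f => ov_src k f == x) w + (v == x))%N.
Proof.
elim: w u => [|e w IH] u /=; first by move=> /eqP ->.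
by move=> /andP [/eqP <- /IH]; lia.
Qed.

Lemma is_walk_cat k u a m b v : is_walk k u a m -> is_walk k m b v -> is_walk k u (a ++ b) v.
Proof. by elim: a u => [|e a IH] u /=; [move=> /eqP -> | move=> /andP [-> /IH]]. Qed.

Lemma is_walk_split k u w v i : is_walk k u w v -> (i < size w)%N ->
  is_walk k u (take i w) (ov_src k (nth [::] w i)) &&
  is_walk k (ov_src k (nth [::] w i)) (drop i w) v.
Proof.
elim: w u i => [//|e w IH] u [|i] /=; last by move=> /andP [-> h] hi; apply: IH.
by move=> /andP [/eqP <- h] _; rewrite !eqxx h.
Qed.

Lemma sumr_count (R : pzSemiRingType) (T : Type) (P : pred T) (w : seq T) :
  \sum_(f <- w) (P f)%:R = (count P w)%:R :> R.
Proof. by elim: w => [|f w IH]; rewrite ?big_nil ?big_cons //= IH natrD. Qed.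

Definition value_at (V : nmodType) (s : seq (seq nat)) (a : 'rV[V]_(size s)) y :=
  \sum_(i < size s) a 0 i *+ (y == nth [::] s i).

Lemma value_at_nth (V : nmodType) (s : seq (seq nat)) (a : 'rV[V]_(size s))
    (j : 'I_(size s)) :
  uniq s -> value_at a (nth [::] s j) = a 0 j.
Proof. exact: sum_nth_eq. Qed.

Section CyclePolytope.
Variables (R : realFieldType) (B : seq nat -> Prop) (k : nat).

Local Notation Es := (Av B k).
Local Notation Vs := (Av B k.-1).
Local Notation nE := (size (Av B k)).
Local Notation nV := (size (Av B k.-1)).
Local Notation E i := (nth [::] (Av B k) i).
Local Notation V i := (nth [::] (Av B k.-1) i).
Local Notation cv := (@cycle_vec R B k).

Definition incidence : 'M[R]_(nV, nE) :=
  \matrix_(v, e) ((ov_tgt (E e) == V v)%:R - (ov_src k (E e) == V v)%:R).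

(* [x *m flow_constraints^T = row_mx 0 1%:M] says that x is a circulation (inflow
   equals outflow at every vertex) of total weight 1. *)
Definition flow_constraints : 'M[R]_(nV + 1, nE) := col_mx incidence (const_mx 1).

Definition edge_count w : 'rV[R]_nE := \row_i (count_mem (E i) w)%:R.

Lemma sum_edge_count w (g : seq nat -> R) : all (mem Es) w ->
  \sum_(i < nE) edge_count w 0 i * g (E i) = \sum_(f <- w) g f.
Proof.
elim: w => [_|f w IH /= /andP [fE wE]].
  by rewrite big_nil big1 // => i _; rewrite mxE mul0r.
have [j Ej] := index_ordP [::] fE.
rewrite big_cons -IH // -Ej -(@sum_nth_eq _ _ [::] Es j (fun i => g (E i)) (Av_uniq B k)).
by rewrite -big_split; apply: eq_bigr => i _; rewrite !mxE /= natrD mulrDl mulr_natl.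
Qed.

Lemma cycle_vecE w : cv w = (size w)%:R^-1 *: edge_count w.
Proof. by apply/rowP => i; rewrite !mxE mulrC. Qed.

Lemma edge_count_closed_walk w u : all (mem Es) w -> is_walk k u w u ->
  edge_count w *m flow_constraints^T = row_mx 0 (size w)%:R%:M.
Proof.
move=> wE uwu; rewrite tr_col_mx mul_mx_row; congr row_mx; apply/rowP => v; rewrite !mxE.
  rewrite (eq_bigr (fun j => edge_count w 0 j *
     ((ov_tgt (E j) == V v)%:R - (ov_src k (E j) == V v)%:R))) => [|j _]; last by rewrite !mxE.
  rewrite (sum_edge_count (fun f => (ov_tgt f == V v)%:R - (ov_src k f == V v)%:R)) //.
  rewrite sumrB !sumr_count.
  by have := balance_walk (V v) uwu; rewrite addnC [X in _ = X]addnC => /addnI ->; rewrite subrr.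
rewrite (eq_bigr (fun j => edge_count w 0 j * 1)) => [|j _]; last by rewrite !mxE.
by rewrite (sum_edge_count (fun=> 1)) // (ord1 v) mulr1n -(count_predT w) -sumr_count.
Qed.

Lemma cycle_vec_circulation w : simple_cycle B k w ->
  cv w *m flow_constraints^T = row_mx 0 1%:M.
Proof.
case: w => [//|e w] /and4P [wE cyc _ _].
rewrite cycle_vecE -scalemxAl (edge_count_closed_walk wE cyc) scale_row_mx scaler0.
by rewrite scale_scalar_mx mulVf // pnatr_eq0.
Qed.

Lemma cycle_polytope_circulation x : @cycle_polytope R B k x ->
  x *m flow_constraints^T = row_mx 0 1%:M.
Proof. by apply: conv_mulmx_eq => _ [w [sw ->]]; exact: cycle_vec_circulation. Qed.

Lemma mulmx_incidence (a : 'rV[R]_nV) (e : 'I_nE) :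
  (a *m incidence) 0 e = value_at a (ov_tgt (E e)) - value_at a (ov_src k (E e)).
Proof. by rewrite !mxE -sumrB; apply: eq_bigr => i _; rewrite !mxE mulrBr !mulr_natr. Qed.

Lemma value_at_walk (a : 'rV[R]_nV) u w v :
  a *m incidence = 0 -> all (mem Es) w -> is_walk k u w v -> value_at a u = value_at a v.
Proof.
move=> a0; elim: w u => [_ _ /eqP -> //|f w IH] u /andP [fE wE] /andP [/eqP <- fw].
have [j Ej] := index_ordP [::] fE; rewrite -(IH _ wE fw) -Ej.
by apply/eqP; rewrite eq_sym -subr_eq0 -mulmx_incidence a0 mxE.
Qed.

Lemma rank_incidence : (0 < nV)%N -> (\rank incidence <= nV - 1)%N.
Proof.
move=> nV_gt0; set one : 'rV[R]_nV := const_mx 1.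
have one_ker : one *m incidence = 0.
  apply/rowP => e; rewrite mulmx_incidence mxE.
  have eE : E e \in Es by apply: mem_nth.
  have [[jt <-] [js <-]] := (index_ordP [::] (ov_tgt_Av eE), index_ordP [::] (ov_src_Av eE)).
  by rewrite !value_at_nth ?Av_uniq // !mxE subrr.
have one_neq0 : one != 0.
  by apply/eqP => /rowP /(_ (Ordinal nV_gt0)); rewrite !mxE => /eqP; rewrite oner_eq0.
have := mxrankS (introT sub_kermxP one_ker); rewrite mxrank_ker rank_rV one_neq0.
by have := rank_leq_row incidence; lia.
Qed.

Hypothesis hsc : ov_strongly_connected B k.
Hypothesis hE : exists e, e \in Es.

Lemma left_kernel_incidence (a : 'rV[R]_nV) :
  a *m incidence = 0 -> forall j0 : 'I_nV, a = a 0 j0 *: const_mx 1.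
Proof.
move=> a0 j0; apply/rowP => j; rewrite !mxE mulr1 -!(value_at_nth a _ (Av_uniq B k.-1)).
have [w /andP [wE jw]] := hsc (mem_nth [::] (ltn_ord j)) (mem_nth [::] (ltn_ord j0)).
exact: value_at_walk a0 wE jw.
Qed.

Lemma exists_closed_walk : exists (w : seq (seq nat)) (u : seq nat),
  [/\ all (mem Es) w, is_walk k u w u & (0 < size w)%N].
Proof.
have [e eE] := hE; have [w /andP [wE ew]] := hsc (ov_tgt_Av eE) (ov_src_Av eE).
by exists (e :: w), (ov_src k e); rewrite /= eE eqxx.
Qed.

Lemma rank_flow_constraints : (nV <= \rank flow_constraints)%N.
Proof.
have [w [u [wE uwu w0]]] := exists_closed_walk.
have [nV0 | nV_gt0] := posnP nV; first by rewrite [X in (X <= _)%N]nV0.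
set j0 : 'I_nV := Ordinal nV_gt0.
set z0 : 'rV[R]_(nV + 1) := row_mx (const_mx 1) 0.
suff kz : (kermx flow_constraints <= z0)%MS.
  have := mxrankS kz; rewrite mxrank_ker rank_rV.
  by have := rank_leq_row flow_constraints; case: (z0 == 0); lia.
apply/row_subP => i; set z := row i _.
have zC : z *m flow_constraints = 0 by rewrite /z -row_mul mulmx_ker row0.
have zr : z = row_mx (lsubmx z) (rsubmx z) by rewrite hsubmxK.
have r0 : rsubmx z = 0.
  have := congr1 (mulmx^~ (edge_count w)^T) zC.
  rewrite -mulmxA -[flow_constraints]trmxK -trmx_mul (edge_count_closed_walk wE uwu).
  rewrite tr_row_mx trmx0 tr_scalar_mx zr mul_row_col mulmx0 add0r mul0mx mul_mx_scalar.
  by rewrite row_mxKr => /eqP; rewrite scaler_eq0 pnatr_eq0 (negbTE (lt0n_neq0 w0)) => /eqP.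
move: zC; rewrite zr r0 mul_row_col mul0mx addr0 => /left_kernel_incidence /(_ j0) l_const.
by apply/sub_rVP; exists (lsubmx z 0 j0); rewrite /z0 scale_row_mx scaler0 -l_const.
Qed.

Lemma nV_le_nE : (nV <= nE)%N.
Proof. exact: leq_trans rank_flow_constraints (rank_leq_col _). Qed.

Lemma cycle_polytope_aff_indep_le e (x : 'I_e.+1 -> 'rV[R]_nE) :
  (forall i, @cycle_polytope R B k (x i)) -> aff_indep x -> (e <= nE - nV)%N.
Proof.
move=> xP /(aff_indep_le_corank (fun i => cycle_polytope_circulation (xP i))).
by rewrite mxrank_tr => /leq_trans; apply; rewrite leq_sub2l // rank_flow_constraints.
Qed.

Definition walk_weight (x : 'rV[R]_nE) w := \sum_(f <- w) value_at x f.

Lemma walk_weight_cat x a b : walk_weight x (a ++ b) = walk_weight x a + walk_weight x b.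
Proof. exact: big_cat. Qed.

Lemma cycle_vec_mulmx_tr x w : all (mem Es) w ->
  cv w *m x^T = ((size w)%:R^-1 * walk_weight x w)%:M.
Proof.
move=> wE; apply/rowP => i; rewrite (ord1 i) cycle_vecE -scalemxAl !mxE eqxx mulr1n; congr (_ * _).
rewrite /walk_weight -(sum_edge_count (value_at x)) //; apply: eq_bigr => j _.
by rewrite [x^T _ _]mxE value_at_nth // Av_uniq.
Qed.

Definition orthogonal_to_cycles (x : 'rV[R]_nE) :=
  forall w, simple_cycle B k w -> cv w *m x^T = 0.

(* A closed walk through some vertex twice splits into two shorter closed walks. *)
Lemma closed_walk_weight_eq0 x : orthogonal_to_cycles x ->
  forall (w : seq (seq nat)) u, all (mem Es) w -> is_walk k u w u -> walk_weight x w = 0.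
Proof.
move=> xo w; elim: {w}(size w) {-2}w (leqnn (size w)) => [|n IH] w.
  by rewrite leqn0 => /nilP -> *; rewrite /walk_weight big_nil.
move=> wn u wE uwu; have [us | /(uniqPn [::])] := boolP (uniq (map (ov_src k) w)).
  case: w wn wE uwu us => [|e w'] _ wE uwu us; first by rewrite /walk_weight big_nil.
  have eu : ov_src k e = u by case/andP: uwu => /eqP.
  have sc : simple_cycle B k (e :: w') by rewrite /simple_cycle eu wE uwu us (map_uniq us).
  move: (xo _ sc); rewrite cycle_vec_mulmx_tr // => /matrixP /(_ 0 0).
  by rewrite !mxE mulr1n => /eqP; rewrite mulf_eq0 invr_eq0 pnatr_eq0 => /orP [//|/eqP].
move=> [i [j [ij jw]]]; rewrite size_map in jw; have iw := ltn_trans ij jw.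
rewrite !(nth_map [::]) // => src_ij.
have /andP [wi iwu] := is_walk_split uwu iw; set d := drop i w.
have jid : (j - i < size d)%N by rewrite size_drop ltn_sub2r.
have /andP [loop rest] := is_walk_split iwu jid.
rewrite nth_drop subnKC ?(ltnW ij) // -src_ij in loop rest.
have ew : w = take i w ++ (take (j - i) d ++ drop (j - i) d) by rewrite !cat_take_drop.
move: wE; rewrite {1}ew !all_cat => /and3P [wE1 wE2 wE3].
rewrite ew !walk_weight_cat addrCA -walk_weight_cat.
rewrite (IH _ _ _ wE2 loop) ?(IH _ _ _ _ (is_walk_cat wi rest)) ?all_cat ?wE1 ?wE3 ?addr0 //.
  by rewrite size_cat !size_drop size_takel; lia.
by rewrite size_takel ?size_drop; lia.
Qed.

Lemma orthogonal_to_cycles_potential x : orthogonal_to_cycles x -> (0 < nV)%N ->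
  exists phi : 'rV[R]_nV, x = phi *m incidence.
Proof.
(* The potential of v is the weight of a fixed walk from the root to v. *)
move=> xo nV_gt0; set root := V (Ordinal nV_gt0).
have rootV : root \in Vs by apply: mem_nth.
pose W (v : 'I_nV) := xchoose (hsc rootV (mem_nth [::] (ltn_ord v))).
have WP v : all (mem Es) (W v) && is_walk k root (W v) (V v).
  exact: xchooseP (hsc rootV (mem_nth [::] (ltn_ord v))).
exists (\row_v walk_weight x (W v)); apply/rowP => e; rewrite mulmx_incidence.
have eE : E e \in Es by apply: mem_nth.
have [[jt Ejt] [js Ejs]] := (index_ordP [::] (ov_tgt_Av eE), index_ordP [::] (ov_src_Av eE)).
rewrite -Ejt -Ejs !value_at_nth ?Av_uniq // !mxE.
have [back /andP [backE back_walk]] := hsc (ov_tgt_Av eE) rootV.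
have [/andP [Wt_E Wt_walk] /andP [Ws_E Ws_walk]] := (WP jt, WP js).
have e_back : is_walk k (V js) (E e :: back) root by rewrite /= Ejs eqxx.
have via_e : walk_weight x (W js ++ [:: E e] ++ back) = 0.
  apply: (closed_walk_weight_eq0 xo _ (is_walk_cat Ws_walk e_back)).
  by rewrite !all_cat /= Ws_E eE backE.
have direct : walk_weight x (W jt ++ back) = 0.
  apply: (closed_walk_weight_eq0 xo _ (is_walk_cat Wt_walk (_ : is_walk k _ back root))).
  - by rewrite all_cat Wt_E.
  - by rewrite Ejt.
move: via_e direct; rewrite !walk_weight_cat /walk_weight big_seq1 value_at_nth ?Av_uniq //.
lra.
Qed.

Definition cycle_mx n S : 'M[R]_(n, nE) := \matrix_(i < n) cv (nth [::] S i).

Lemma cycle_mx_cons n c S : cycle_mx n.+1 (c :: S) = col_mx (cv c) (cycle_mx n S).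
Proof.
apply/matrixP => i j; rewrite !mxE; case: splitP => [i0 /= -> | i' /= ->].
  by rewrite (ord1 i0) !mxE.
by rewrite !mxE.
Qed.

Lemma exists_cycle_outside n S : all (simple_cycle B k) S -> row_free (cycle_mx n S) ->
  (n < nE - nV + 1)%N -> exists2 c, simple_cycle B k c & ~~ (cv c <= cycle_mx n S)%MS.
Proof.
move=> Ssc Sfree small; apply: contrapT => all_in.
have span c : simple_cycle B k c -> (cv c <= cycle_mx n S)%MS.
  by move=> sc; apply: contrapT => c_out; apply: all_in; exists c => //; apply/negP.
have nV_gt0 : (0 < nV)%N.
  by have [e /ov_src_Av] := hE; case: (Av B k.-1).
suff ker_sub : (kermx (cycle_mx n S)^T <= incidence)%MS.
  have := mxrankS ker_sub; rewrite mxrank_ker mxrank_tr (eqP Sfree).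
  by have := rank_incidence nV_gt0; have := nV_le_nE; lia.
apply/row_subP => i; set y := row i _.
have yS : y *m (cycle_mx n S)^T = 0 by rewrite /y -row_mul mulmx_ker row0.
have yo : orthogonal_to_cycles y.
  move=> c /span /submxP [D ->].
  by rewrite -mulmxA -[cycle_mx n S]trmxK -trmx_mul yS trmx0 mulmx0.
by have [phi ->] := orthogonal_to_cycles_potential yo nV_gt0; apply: submxMl.
Qed.

Lemma exists_free_cycles m : (m <= nE - nV + 1)%N ->
  exists S, [/\ size S = m, all (simple_cycle B k) S & row_free (cycle_mx m S)].
Proof.
elim: m => [_ | m IH small].
  by exists [::]; rewrite /row_free -leqn0 rank_leq_row.
have [S [Ssize Ssc Sfree]] := IH (ltnW small); subst m.
have [c sc c_out] := exists_cycle_outside Ssc Sfree small.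
exists (c :: S); split; rewrite /= ?sc ?cycle_mx_cons //.
exact: row_free_col_mx.
Qed.

Lemma cycle_polytope_affdim : @is_affdim R nE (@cycle_polytope R B k) (nE - nV).
Proof.
split; last exact: cycle_polytope_aff_indep_le.
have [S [size_S Ssc Sfree]] := exists_free_cycles (leqnn _).
rewrite addn1 in size_S Sfree.
exists (fun i => cv (nth [::] S i)); split; last exact: row_free_aff_indep.
move=> i; apply: conv_self; exists (nth [::] S i); split=> //.
by apply/(all_nthP [::] Ssc); rewrite size_S.
Qed.

End CyclePolytope.

Lemma ov_conclusion_closed (R : realFieldType) k B : (1 <= k)%N ->
  (forall b, B b -> (0 < size b)%N) -> (exists s, inAv B s) ->
  closed_dsum B \/ closed_ssum B -> ov_conclusion R B k.
Proof.
move=> k1 B0 ex cl; have hsc := ov_strongly_connected_closed k1 cl.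
have hE := Av_nonempty k B0 cl ex.
split=> //; exists (size (Av B k) - size (Av B k.-1))%N.
by split; [exact: cycle_polytope_affdim | rewrite subzn // nV_le_nE].
Qed.

Theorem mainTheorem2 (R : realFieldType) :
  (forall (k : nat) (B : seq nat -> Prop),
      (1 <= k)%N ->
      (forall b, B b -> (0 < size b)%N /\ is_perm b) ->
      (exists s, inAv B s) ->
      closed_dsum B \/ closed_ssum B ->
      ov_conclusion R B k) /\
  (forall (k : nat) (tau : seq nat),
      (1 <= k)%N -> is_perm tau -> (2 <= size tau)%N ->
      ov_conclusion R (fun b => b = tau) k).
Proof.
split=> [k B k1 hB | k tau k1 _ tau2]; apply: ov_conclusion_closed => //.
- by move=> b /hB [].
- by move=> _ ->; apply: leq_trans tau2.
- exists [:: 1]; split=> // _ -> [m [_ occ]].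
  by move: tau2; rewrite -occ size_std leqNgt ltnS (size_subseq (mask_subseq m [:: 1])).
- exact: closed_single.
Qed.
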